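(* Let $\Sigma$ be a finite alphabet and $S\in\Sigma^m$. Then the set $\mathrm{Foc}(S)$ is a set of window representatives of length $m$.
   Context: For $S=s_0\cdots s_{m-1}$ let $p=p_1\cdots p_m=S^{\mathrm{rev}}=s_{m-1}\cdots s_0$. The factor oracle of $p$ is the deterministic automaton with states $0,\dots,m$, start state $0$, built as follows: set $\mathrm{sl}(0)=-1$; for $i=1,\dots,m$: add the transition $i-1\xrightarrow{p_i} i$; let $k=\mathrm{sl}(i-1)$; while $k\ne-1$ and $k$ has no outgoing transition labelled $p_i$, add $k\xrightarrow{p_i} i$ and set $k=\mathrm{sl}(k)$; finally $\mathrm{sl}(i)=-1$ if $k=-1$, else $\mathrm{sl}(i)$ is the target of the transition from $k$ labelled $p_i$. Missing transitions lead to a sink state FAIL. $\mathrm{Foc}(S)=\{x\in\Sigma^*: \text{the factor oracle of } S^{\mathrm{rev}} \text{ is not in FAIL after reading } x^{\mathrm{rev}}\}$. For a finite set $\mathcal{R}\subset\Sigma^*$ and $a\in\Sigma^m$, $\mathrm{rep}_\mathcal{R}(a)$ is the longest suffix of $a$ (including $\varepsilon$ and $a$) lying in $\mathcal{R}$. $\mathcal{R}$ is a set of window representatives of length $m$ if (1) every $a\in\Sigma^m$ has a suffix in $\mathcal{R}$, and (2) there is $\delta_\mathcal{R}:\mathcal{R}\times\Sigma\to\mathcal{R}$ with $\delta_\mathcal{R}(\mathrm{rep}_\mathcal{R}(a),\sigma)=\mathrm{rep}_\mathcal{R}(a_1\cdots a_{m-1}\sigma)$ for all $a\in\Sigma^m$,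 $\sigma\in\Sigma$. (Finiteness of $\mathrm{Foc}(S)$ is part of the definition being claimed.) *)

From mathcomp Require Import all_boot.
Set Implicit Arguments. Unset Strict Implicit. Unset Printing Implicit Defensive.

Section FactorOracle.
Variable Sigma : eqType.

(* Transition table: list of ((source, label), target); lookup = first match.
   The construction never adds two transitions with the same (source,label). *)
Definition trans_tbl := seq ((nat * Sigma) * nat).

Fixpoint lookup (tr : trans_tbl) (q : nat) (c : Sigma) : option nat :=
  match tr with
  | [::] => None
  | ((q', c'), t) :: tr' => if (q' == q) && (c' == c) then Some t else lookup tr' q c
  end.

(* Suffix links: sl is a list indexed by states, None encodes -1. *)
Definition slink (sl : seq (option nat)) (k : nat) : option nat := nth None sl k.

(* Fuel bounds the iterations (sl is strictly decreasing on
   states < i, so fuel i+1 suffices). *)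
Fixpoint oracle_loop (fuel : nat) (sl : seq (option nat)) (i : nat) (c : Sigma)
    (tr : trans_tbl) (k : option nat) : trans_tbl * option nat :=
  match fuel with
  | 0 => (tr, k)
  | fuel'.+1 =>
    match k with
    | None => (tr, None)
    | Some k' =>
      match lookup tr k' c with
      | Some _ => (tr, k)
      | None => oracle_loop fuel' sl i c (((k', c), i) :: tr) (slink sl k')
      end
    end
  end.

(* Step i (1 <= i <= m) reading letter c = p_i. *)
Definition oracle_step (i : nat) (c : Sigma) (st : trans_tbl * seq (option nat))
    : trans_tbl * seq (option nat) :=
  let: (tr, sl) := st in
  let tr1 := ((i.-1, c), i) :: tr in
  let: (tr2, k) := oracle_loop i.+1 sl i c tr1 (slink sl i.-1) in
  let sli := match k with None => Some 0 | Some k' => lookup tr2 k' c end in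
  (tr2, rcons sl sli).

Fixpoint oracle_build_from (i : nat) (p : seq Sigma) (st : trans_tbl * seq (option nat))
    : trans_tbl * seq (option nat) :=
  match p with
  | [::] => st
  | c :: p' => oracle_build_from i.+1 p' (oracle_step i c st)
  end.

(* Factor oracle of p = p_1 ... p_m: states 0..m, sl(0) = -1. *)
Definition factor_oracle (p : seq Sigma) : trans_tbl :=
  (oracle_build_from 1 p ([::], [:: None])).1.

(* Run from the start state 0; None = FAIL (sink). *)
Fixpoint run_from (tr : trans_tbl) (q : option nat) (w : seq Sigma) : option nat :=
  match w with
  | [::] => q
  | c :: w' =>
    match q with
    | None => None
    | Some q' => run_from tr (lookup tr q' c) w'
    end
  end.

Definition Foc (S : seq Sigma) : pred (seq Sigma) :=
  fun x => run_from (factor_oracle (rev S)) (Some 0) (rev x) != None.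

Definition rep (R : pred (seq Sigma)) (a : seq Sigma) : seq Sigma :=
  drop (find (fun k => R (drop k a)) (iota 0 (size a).+1)) a.

Definition window_representatives (m : nat) (R : pred (seq Sigma)) : Prop :=
  (exists l : seq (seq Sigma), forall x, R x = (x \in l)) /\
  (forall a : seq Sigma, size a = m -> exists2 k, k <= size a & R (drop k a)) /\
  (exists delta : seq Sigma -> Sigma -> seq Sigma,
      (forall r s, R r -> R (delta r s)) /\
      (forall (a : seq Sigma) (s : Sigma), size a = m ->
          delta (rep R a) s = rep R (rcons (behead a) s))).

End FactorOracle.

From mathcomp Require Import all_boot zify.
Set Implicit Arguments. Unset Strict Implicit. Unset Printing Implicit Defensive.

(* Foc(S) contains the empty word, is closed under deleting the last letter, and contains no
   word longer than S, since oracle transitions go from smaller to larger states.  Any set R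
   with these three properties is a set of window representatives, with delta(r, s) = rep_R(r s):
   by prefix closure the longest R-suffix of (behead a) s is at most one letter longer than
   rep_R(a), and by the length bound the longest R-suffix of a s is no longer than a; so in either
   case the shorter of the words rep_R(a) s, (behead a) s already contains the longest R-suffix of
   the longer one.
   Closure of Foc(S) under deleting the last letter means that the oracle language is closed
   under deleting the first letter.  This follows from an invariant of the construction: whenever
   k --a--> t and sl(k) = j, there is a transition j --a--> u with u reachable from t along
   suffix links, and every state reaches 0 along suffix links. *)

Lemma suffix_size_inj (T : eqType) (u w a : seq T) :
  suffix u a -> suffix w a -> size u = size w -> u = w.
Proof. by rewrite !suffixE => /eqP du /eqP dw eq_uw; rewrite -du -dw eq_uw. Qed.

Lemma suffix_of_longer (T : eqType) (u w a : seq T) :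
  suffix u a -> suffix w a -> size u <= size w -> suffix u w.
Proof.
move=> ua wa le_uw; have le_wa := size_suffix wa.
move: ua wa; rewrite !suffixE => /eqP {2}<- /eqP <-.
by rewrite drop_drop size_drop; apply/eqP; congr drop; lia.
Qed.

Section Representatives.
Variables (T : eqType) (R : pred (seq T)).
Hypothesis R_nil : R [::].

Lemma rep_suffix a : suffix (rep R a) a.
Proof. exact: suffix_drop. Qed.

Lemma rep_in a : R (rep R a).
Proof.
have has_R : has (fun k => R (drop k a)) (iota 0 (size a).+1).
  by apply/hasP; exists (size a); rewrite ?mem_iota ?add0n ?leqnn ?drop_size.
have := nth_find 0 has_R; rewrite nth_iota ?add0n //.
by move: has_R; rewrite has_find size_iota.
Qed.

Lemma rep_max a w : suffix w a -> R w -> size w <= size (rep R a).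
Proof.
move=> wa Rw; have le_wa := size_suffix wa; move: wa; rewrite suffixE => /eqP drop_w.
rewrite /rep size_drop; set k := find _ _.
case: (leqP k (size a - size w)) => [|lt_k]; first lia.
have := before_find 0 lt_k; rewrite nth_iota; last lia.
by rewrite add0n drop_w Rw.
Qed.

Lemma rep_suffix_eq a w : suffix w a -> size (rep R a) <= size w -> rep R w = rep R a.
Proof.
move=> wa le_rw; have rw := suffix_of_longer (rep_suffix a) wa le_rw.
have rwa : suffix (rep R w) a := suffix_trans (rep_suffix w) wa.
apply: (suffix_size_inj rwa (rep_suffix a)).
by apply/eqP; rewrite eqn_leq (rep_max rwa) ?(rep_max rw) ?rep_in.
Qed.

Hypothesis R_prefix : forall x s, R (rcons x s) -> R x.

Lemma rep_rcons_size a s : size (rep R (rcons a s)) <= (size (rep R a)).+1.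
Proof.
have := rep_suffix (rcons a s); have := rep_in (rcons a s).
case/lastP: (rep R (rcons a s)) => [//|y x] /R_prefix Ry.
by rewrite suffix_rcons size_rcons ltnS => /andP [_ ya]; apply: rep_max.
Qed.

Lemma rep_rcons_rep a s : (forall x, R x -> size x <= size a) ->
  rep R (rcons (rep R a) s) = rep R (rcons (behead a) s).
Proof.
case: a => [//|x b] R_bounded /=; set r := rep R (x :: b).
have /suffixP [[|y u] /= def_r] : suffix r (x :: b) := rep_suffix _.
  rewrite -def_r; apply: esym; apply: rep_suffix_eq; first exact: suffix_cons.
  by rewrite size_rcons R_bounded ?rep_in.
case: def_r => _ def_b; apply: rep_suffix_eq.
  by rewrite def_b rcons_cat suffix_suffix.
rewrite size_rcons (leq_trans (rep_rcons_size b s)) // ltnS.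
by rewrite rep_max ?rep_in // (suffix_trans (rep_suffix b) (suffix_cons b x)).
Qed.

End Representatives.

Lemma bounded_words_finite (T : finType) m :
  exists l : seq (seq T), forall x, size x <= m -> x \in l.
Proof.
exists (flatten [seq [seq tval t | t : k.-tuple T] | k <- iota 0 m.+1]) => x le_xm.
apply/flattenP; exists [seq tval t | t : (size x).-tuple T].
  by apply/mapP; exists (size x); rewrite // mem_iota ltnS le_xm.
by apply/mapP; exists (in_tuple x); rewrite ?mem_enum.
Qed.

Lemma prefix_closed_window_representatives (T : finType) m (R : pred (seq T)) :
  R [::] -> (forall x s, R (rcons x s) -> R x) -> (forall x, R x -> size x <= m) ->
  window_representatives m R.
Proof.
move=> R_nil R_prefix R_bounded; split; [|split].
- have [l l_words] := bounded_words_finite T m.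
  exists (filter R l) => x; rewrite mem_filter.
  by case: (boolP (R x)) => //= Rx; rewrite l_words ?R_bounded.
- by move=> a _; exists (size a); rewrite ?drop_size.
- exists (fun r s => rep R (rcons r s)); split=> [r s _|a s size_a].
    exact: rep_in.
  by apply: rep_rcons_rep => // x /R_bounded; rewrite size_a.
Qed.

Inductive slink_reach (sl : seq (option nat)) : nat -> nat -> Prop :=
| reach_refl t : slink_reach sl t t
| reach_step t j u : slink sl t = Some j -> slink_reach sl j u -> slink_reach sl t u.

Lemma slink_reach_trans sl t v u :
  slink_reach sl t v -> slink_reach sl v u -> slink_reach sl t u.
Proof. by elim=> // t' j v' sl_t _ IH /IH; apply: reach_step. Qed.

Lemma slink_rcons sl x k : k < size sl -> slink (rcons sl x) k = slink sl k.
Proof. by move=> lt_k; rewrite /slink nth_rcons lt_k. Qed.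

Lemma slink_rcons_size sl x : slink (rcons sl x) (size sl) = x.
Proof. by rewrite /slink nth_rcons ltnn eqxx. Qed.

Lemma slink_reach_rcons sl x t u : slink_reach sl t u -> slink_reach (rcons sl x) t u.
Proof.
elim=> [t'|t' j u' sl_t _ IH]; first exact: reach_refl.
apply: reach_step IH; rewrite slink_rcons //.
by case: ltnP sl_t => // le_t; rewrite /slink nth_default.
Qed.

Section FactorOracleInvariant.
Variable Sigma : eqType.
Implicit Types (tr : trans_tbl Sigma) (sl : seq (option nat)).

Definition subtable tr tr' := forall q a t, lookup tr q a = Some t -> lookup tr' q a = Some t.

Lemma subtable_trans tr1 tr2 tr3 : subtable tr1 tr2 -> subtable tr2 tr3 -> subtable tr1 tr3.
Proof. by move=> sub12 sub23 q a t /sub12 /sub23. Qed.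

Lemma subtable_cons tr k c i : lookup tr k c = None -> subtable tr (((k, c), i) :: tr).
Proof. by move=> no_kc q a t /=; case: ifP => // /andP [/eqP <- /eqP <-]; rewrite no_kc. Qed.

Definition forward tr n := forall q a t, lookup tr q a = Some t -> q < t <= n.

Section OracleLoop.
Variables (sl : seq (option nat)) (i : nat) (c : Sigma) (tr0 : trans_tbl Sigma).
Hypothesis slink_lt : forall j x, slink sl j = Some x -> x < j.

(* Sources of added transitions lie above the current k, so the transition found when the
   loop stops is not one it added. *)
Record loop_inv tr (k : option nat) : Prop := LoopInv {
  loop_sub : subtable tr0 tr;
  loop_new : forall q a t, lookup tr q a = Some t -> lookup tr0 q a = None ->
    [/\ a = c, t = i, q < i, (forall k0, k = Some k0 -> k0 < q) &
        forall j, slink sl q = Some j -> lookup tr j c = Some i \/ k = Some j] }.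

Lemma loop_inv_add tr k0 : k0 < i -> lookup tr k0 c = None -> loop_inv tr (Some k0) ->
  loop_inv (((k0, c), i) :: tr) (slink sl k0).
Proof.
move=> lt_k0 no_k0 [sub new]; split=> [|q a t].
  exact: subtable_trans (subtable_cons _ no_k0).
rewrite /=; case: ifP => [/andP [/eqP <- /eqP <-] [<-] _|_ tr_q tr0_q].
  by split=> // [k1 /slink_lt|j ->]; [|right].
have [-> -> lt_q lt_k0q closed] := new _ _ _ tr_q tr0_q.
split=> // [k1 /slink_lt lt_k1|j /closed [tr_j|[<-]]].
- exact: ltn_trans lt_k1 (lt_k0q _ erefl).
- by left; case: ifP.
- by left; rewrite !eqxx.
Qed.

Lemma oracle_loop_inv fuel tr k :
  (forall k0, k = Some k0 -> k0 < i /\ k0 < fuel) -> loop_inv tr k ->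
  let: (tr', k') := oracle_loop fuel sl i c tr k in
  loop_inv tr' k' /\ (forall k0, k' = Some k0 -> lookup tr' k0 c != None).
Proof.
elim: fuel tr k => [|fuel IH] tr [k0|] k_lt inv //=; first by have [_] := k_lt k0 erefl.
case tr_k0: (lookup tr k0 c) => [u|]; first by split=> // _ [<-]; rewrite tr_k0.
have [lt_i lt_fuel] := k_lt k0 erefl.
apply: IH; last exact: loop_inv_add.
by move=> k1 /slink_lt; lia.
Qed.

Lemma loop_stop_old tr k0 u :
  loop_inv tr (Some k0) -> lookup tr k0 c = Some u -> lookup tr0 k0 c = Some u.
Proof.
move=> [sub new] tr_k0; case tr0_k0: (lookup tr0 k0 c) => [u'|].
  by rewrite -tr_k0 -(sub _ _ _ tr0_k0).
by have [_ _ _ /(_ k0 erefl)] := new _ _ _ tr_k0 tr0_k0; rewrite ltnn.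
Qed.

End OracleLoop.

Lemma loop_inv_start n c tr sl : (forall j x, slink sl j = Some x -> x < j) -> forward tr n ->
  loop_inv sl n.+1 c tr (((n, c), n.+1) :: tr) (slink sl n).
Proof.
move=> sl_lt fwd; have no_n : lookup tr n c = None.
  by case tr_n: (lookup tr n c) => [t|] //; have := fwd _ _ _ tr_n; lia.
split=> [|q a t]; first exact: subtable_cons.
rewrite /=; case: ifP => [/andP [/eqP <- /eqP <-] [<-] _|_ -> //].
by split=> // [k0 /sl_lt|j ->]; [|right].
Qed.

Record oracle_inv n tr sl : Prop := OracleInv {
  inv_size : size sl = n.+1;
  inv_slink_lt : forall j x, slink sl j = Some x -> x < j;
  inv_reach0 : forall t, t <= n -> slink_reach sl t 0;
  inv_forward : forward tr n;
  inv_trans_slink : forall k a t j, lookup tr k a = Some t -> slink sl k = Some j ->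
    exists2 u, lookup tr j a = Some u & slink_reach sl t u }.

Lemma trans_slink_step n c tr sl tr' k' u :
  oracle_inv n tr sl -> loop_inv sl n.+1 c tr tr' k' ->
  (forall k0, k' = Some k0 -> lookup tr' k0 c = Some u) ->
  forall k a t j, lookup tr' k a = Some t -> slink (rcons sl (Some u)) k = Some j ->
    exists2 v, lookup tr' j a = Some v & slink_reach (rcons sl (Some u)) t v.
Proof.
move=> [size_sl _ _ fwd trans_sl] [sub new] k'_u k a t j tr'_k.
case tr_k: (lookup tr k a) => [t0|].
  move: tr'_k; rewrite (sub _ _ _ tr_k) => -[<-].
  rewrite slink_rcons => [/(trans_sl _ _ _ _ tr_k) [v tr_j reach]|].
    by exists v; [apply: sub | apply: slink_reach_rcons].
  by have := fwd _ _ _ tr_k; rewrite size_sl; lia.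
have [-> -> lt_k _ closed] := new _ _ _ tr'_k tr_k.
rewrite slink_rcons ?size_sl // => /closed [tr'_j|k'_j].
  by exists n.+1 => //; apply: reach_refl.
exists u; first exact: k'_u.
by apply: reach_step (reach_refl _ _); rewrite -size_sl slink_rcons_size.
Qed.

Lemma oracle_step_inv n c tr sl : oracle_inv n tr sl ->
  let: (tr', sl') := oracle_step n.+1 c (tr, sl) in oracle_inv n.+1 tr' sl'.
Proof.
move=> inv; have [size_sl sl_lt reach0 fwd _] := inv.
rewrite /oracle_step -[n.+1.-1]/n.
have start_lt k0 : slink sl n = Some k0 -> k0 < n.+1 /\ k0 < n.+2 by move/sl_lt; lia.
have := oracle_loop_inv sl_lt start_lt (loop_inv_start c sl_lt fwd).
case: oracle_loop => tr' k' [[sub new] stop].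
have [u sli_u le_un] :
    exists2 u, (if k' is Some k0 then lookup tr' k0 c else Some 0) = Some u & u <= n.
  case: k' new stop => [k0|] new stop; last by exists 0.
  case tr'_k0: (lookup tr' k0 c) (stop k0 erefl) => [u|] // _; exists u => //.
  by have /andP [] := fwd _ _ _ (loop_stop_old (LoopInv sub new) tr'_k0).
rewrite sli_u; split.
- by rewrite size_rcons size_sl.
- move=> j x; rewrite /slink nth_rcons size_sl; case: ltnP => [lt_j /sl_lt //|_].
  by case: eqP => // -> [<-]; rewrite ltnS.
- move=> t; rewrite leq_eqVlt ltnS => /orP [/eqP -> | /reach0 /slink_reach_rcons //].
  apply: reach_step (slink_reach_rcons _ (reach0 _ le_un)).
  by rewrite -size_sl slink_rcons_size.
- move=> q a t tr'_q; case tr_q: (lookup tr q a) => [t0|].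
    by move: tr'_q; rewrite (sub _ _ _ tr_q) => -[<-]; have := fwd _ _ _ tr_q; lia.
  by have [_ -> lt_q _ _] := new _ _ _ tr'_q tr_q; rewrite lt_q /=.
- by apply: trans_slink_step inv (LoopInv sub new) _ => k0 k'_k0; rewrite k'_k0 in sli_u.
Qed.

Lemma oracle_build_inv p n (st : trans_tbl Sigma * seq (option nat)) :
  oracle_inv n st.1 st.2 ->
  oracle_inv (n + size p) (oracle_build_from n.+1 p st).1 (oracle_build_from n.+1 p st).2.
Proof.
elim: p n st => [|c p IH] n [tr sl] inv; first by rewrite addn0.
rewrite addnS -addSn; apply: IH.
by have := oracle_step_inv c inv; case: oracle_step.
Qed.

Lemma factor_oracle_inv p : exists sl, oracle_inv (size p) (factor_oracle p) sl.
Proof.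
have inv0 : oracle_inv 0 [::] [:: None].
  split=> // [[|j] x|t]; rewrite ?leqn0 => //; first by rewrite /slink /= nth_nil.
by move=> /eqP ->; apply: reach_refl.
exists (oracle_build_from 1 p ([::], [:: None])).2.
by have := @oracle_build_inv p 0 ([::], [:: None]) inv0; rewrite add0n.
Qed.

Lemma run_none tr w : run_from tr None w = None.
Proof. by case: w. Qed.

Lemma run_rcons tr q w a :
  run_from tr q (rcons w a) = obind (fun q' => lookup tr q' a) (run_from tr q w).
Proof. by elim: w q => [|b w IH] [q|] //=; rewrite run_none. Qed.

Lemma run_forward tr m w q t :
  forward tr m -> q <= m -> run_from tr (Some q) w = Some t -> q + size w <= t <= m.
Proof.
move=> fwd; elim: w q => [|b w IH] q le_qm /=; first by move=> [<-]; rewrite addn0 leqnn.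
case tr_q: (lookup tr q b) => [q'|]; last by rewrite run_none.
have /andP [lt_qq' le_q'm] := fwd _ _ _ tr_q.
by move/IH => /(_ le_q'm); lia.
Qed.

Lemma reach_lookup n tr sl q u a t : oracle_inv n tr sl -> slink_reach sl q u ->
  lookup tr q a = Some t -> exists2 v, lookup tr u a = Some v & slink_reach sl t v.
Proof.
move=> inv reach; elim: reach t => [q' t tr_q|q' j u' sl_q _ IH t tr_q].
  by exists t => //; apply: reach_refl.
have [t1 tr_j reach1] := inv_trans_slink inv tr_q sl_q.
have [v tr_u reach2] := IH _ tr_j.
by exists v => //; apply: slink_reach_trans reach1 reach2.
Qed.

Lemma run_behead n tr sl c w t : oracle_inv n tr sl ->
  run_from tr (Some 0) (c :: w) = Some t ->
  exists2 u, run_from tr (Some 0) w = Some u & slink_reach sl t u.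
Proof.
move=> inv; elim/last_ind: w t => [|w a IH] t.
  move=> /= tr_0; exists 0 => //; apply: (inv_reach0 inv).
  by case/andP: (inv_forward inv tr_0).
rewrite -rcons_cons !run_rcons.
case run_w: (run_from tr (Some 0) (c :: w)) => [q|] //= tr_q.
have [u -> reach] := IH _ run_w.
exact: reach_lookup inv reach tr_q.
Qed.

End FactorOracleInvariant.

(* Foc reads words backwards: deleting the last letter of x deletes the first letter read. *)
Lemma Foc_rcons (Sigma : eqType) (S : seq Sigma) x s : Foc S (rcons x s) -> Foc S x.
Proof.
rewrite /Foc rev_rcons; have [sl inv] := factor_oracle_inv (rev S).
case run_sx: run_from => [t|] // _.
by have [u -> _] := run_behead inv run_sx.
Qed.

Lemma Foc_size (Sigma : eqType) (S : seq Sigma) x : Foc S x -> size x <= size S.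
Proof.
rewrite /Foc; have [sl inv] := factor_oracle_inv (rev S); rewrite size_rev in inv.
case run_x: run_from => [t|] // _.
by have := run_forward (inv_forward inv) (leq0n _) run_x; rewrite size_rev; lia.
Qed.

Theorem lemma20 (Sigma : finType) (S : seq Sigma) :
  window_representatives (size S) (Foc S).
Proof.
apply: prefix_closed_window_representatives.
- by [].
- exact: Foc_rcons.
- exact: Foc_size.
Qed.
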